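(* Let $m\ge 1$. Any product two-action game with $m$ players whose characteristic tuple is $(\underline v,\sigma^1,\dots,\sigma^m)=((0,\dots,0),\delta^1,\dots,\delta^m)$ is maximal; that is, for every $\pi\in S_m\setminus\mathrm{Der}_m$, exactly half of the elements of $EC(\pi)$ are Nash equilibria. (Such games exist for every $m$: choose $v_i=0$ and numbers $a^i_j\in(0,1)$ ordered according to $\delta^j$, and e.g. $U^i(s^i_0,\cdot)=0$, with $V^i$ the multilinear map $\gamma^i\prod_{j\neq i}(\gamma^j-a^i_j)$.)
   Context: Fix an integer $m\ge 1$ and $\mathcal A=\{1,\dots,m\}$. A two-action game is a finite game in normal form with player set $\mathcal A$ in which each player $i$ has exactly two pure strategies $s^i_0,s^i_1$, together with utility functions $U^i:S\to\mathbb R$, where $S=\prod_{i\in\mathcal A}\{s^i_0,s^i_1\}$. A mixed strategy combination is identified with $\underline\gamma=(\gamma^1,\dots,\gamma^m)\in[0,1]^m$, where $\gamma^i$ is the probability with which player $i$ plays $s^i_1$. The expected utility $V^i$ is the multilinear extension $V^i(\underline\gamma)=\sum_{(j_1,\dots,j_m)\in\{0,1\}^m}\prod_{k=1}^m p_k(j_k)\,U^i(s^1_{j_1},\dots,s^m_{j_m})$ with $p_k(1)=\gamma^k$, $p_k(0)=1-\gamma^k$. Write $\underline\gamma^{-i}=(\gamma^j)_{j\ne i}$ and $\lambda^i(\underline\gamma^{-i}):=V^i(\underline\gamma)|_{\gamma^i=1}-V^i(\underline\gamma)|_{\gamma^i=0}$. A Nash equilibrium is a point $\underline\gamma\in[0,1]^m$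 such that for every $i$: $\lambda^i(\underline\gamma^{-i})=0$ if $0<\gamma^i<1$; $\lambda^i(\underline\gamma^{-i})\le 0$ if $\gamma^i=0$; $\lambda^i(\underline\gamma^{-i})\ge 0$ if $\gamma^i=1$. For $\underline\gamma$ put $L(\underline\gamma)=\{i:\gamma^i\in\{0,1\}\}$. A two-action game is a product two-action game if there exist $\underline v=(v_1,\dots,v_m)\in\{0,1\}^m$ and numbers $a^i_j\in(0,1)$ for $i,j\in\mathcal A$, $i\ne j$, with $a^{i_1}_j\neq a^{i_2}_j$ whenever $i_1\neq i_2$ and both differ from $j$, such that $\lambda^i(\underline\gamma^{-i})=(-1)^{v_i}\prod_{j\in\mathcal A\setminus\{i\}}(\gamma^j-a^i_j)$ for every $i\in\mathcal A$. For $j\in\mathcal A$ the $j$-th associated permutation $\sigma^j\in S_m$ is the unique permutation with $\sigma^j(j)=j$ such that for $i,i'\in\mathcal A\setminus\{j\}$ one has $\sigma^j(i)<\sigma^j(i')$ iff $a^i_j>a^{i'}_j$. The tuple $(\underline v,\sigma^1,\dots,\sigma^m)$ is the characteristic tuple. For $\pi\in S_m$, $F(\pi)=\{i:\pi(i)=i\}$; $\mathrm{Der}_m=\{\pi\in S_m: F(\pi)=\emptyset\}$; $EC(\pi):=\{\underline\gamma\in[0,1]^m \mid L(\underline\gamma)=F(\pi),\ \gamma^j=a^{\pi(j)}_j \text{ for all } j\notin F(\pi)\}$. A product two-action game is maximal if for every $\pi\in S_m\setminus\mathrm{Der}_m$ exactly half of the elements of $EC(\pi)$ are Nash equilibria.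 For $j\in\mathcal A$, $\delta^j\in S_m$ is the unique permutation with $\delta^j(j)=j$ such that for all $k_1<k_2$ in $\mathcal A\setminus\{j\}$ one has $\delta^j(k_1)>\delta^j(k_2)$ iff $k_1<j<k_2$. *)

(* Two-action games with players 'I_m (0-based indices). *)
From HB Require Import structures.
From mathcomp Require Import all_boot all_order all_algebra all_fingroup.
Set Implicit Arguments. Unset Strict Implicit. Unset Printing Implicit Defensive.
Import Order.TTheory GRing.Theory Num.Theory.
Local Open Scope ring_scope.

Section Games.
Variables (R : realFieldType) (m : nat).

(* A pure strategy profile (s^1_{j_1},...,s^m_{j_m}) is encoded by the
   vector (j_1,...,j_m) in {0,1}^m, i.e. a finite function 'I_m -> bool
   (true = s^k_1, false = s^k_0).  U i s = U^i(s). *)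
Definition game := 'I_m -> {ffun 'I_m -> bool} -> R.

Definition pweight (g : 'I_m -> R) (k : 'I_m) (b : bool) : R :=
  if b then g k else 1 - g k.

Definition Vexp (U : game) (i : 'I_m) (g : 'I_m -> R) : R :=
  \sum_(s : {ffun 'I_m -> bool}) (\prod_(k < m) pweight g k (s k)) * U i s.

Definition upd (g : 'I_m -> R) (i : 'I_m) (x : R) : 'I_m -> R :=
  fun k => if k == i then x else g k.

Definition lam (U : game) (i : 'I_m) (g : 'I_m -> R) : R :=
  Vexp U i (upd g i 1) - Vexp U i (upd g i 0).

Definition in_cube (g : {ffun 'I_m -> R}) : bool :=
  [forall k, (0 <= g k) && (g k <= 1)].

Definition nash (U : game) (g : {ffun 'I_m -> R}) : bool :=
  in_cube g &&
  [forall i, [&& ((0 < g i) && (g i < 1)) ==> (lam U i g == 0),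
                 (g i == 0) ==> (lam U i g <= 0) &
                 (g i == 1) ==> (0 <= lam U i g)]].

(* product two-action game with data v, a  (a i j = a^i_j) *)
Definition product_game (U : game) (v : 'I_m -> bool) (a : 'I_m -> 'I_m -> R)
  : Prop :=
  [/\ (forall i j : 'I_m, i != j -> 0 < a i j < 1),
      (forall i1 i2 j : 'I_m, i1 != i2 -> i1 != j -> i2 != j -> a i1 j != a i2 j)
    & (forall (i : 'I_m) (g : 'I_m -> R), (forall k, 0 <= g k <= 1) ->
        lam U i g = (-1) ^+ v i * \prod_(j < m | j != i) (g j - a i j))].

Definition assoc_perm (a : 'I_m -> 'I_m -> R) (j : 'I_m) (s : {perm 'I_m}) : Prop :=
  s j = j /\
  forall i i' : 'I_m, i != j -> i' != j -> ((s i < s i')%N <-> a i' j < a i j).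

Definition delta_perm (j : 'I_m) (s : {perm 'I_m}) : Prop :=
  s j = j /\
  forall k1 k2 : 'I_m, (k1 < k2)%N -> k1 != j -> k2 != j ->
    ((s k2 < s k1)%N <-> (k1 < j < k2)%N).

(* the characteristic tuple is (v, sigma^1..sigma^m) = (w, tau^1..tau^m) where
   the tau^j are determined by their defining property tauP j *)
Definition char_tuple_is (v : 'I_m -> bool) (a : 'I_m -> 'I_m -> R)
  (w : 'I_m -> bool) (tauP : 'I_m -> {perm 'I_m} -> Prop) : Prop :=
  (forall i, v i = w i) /\
  (forall j, exists s : {perm 'I_m}, tauP j s /\ assoc_perm a j s).

Definition EC (a : 'I_m -> 'I_m -> R) (pi : {perm 'I_m}) (g : {ffun 'I_m -> R})
  : bool :=
  [&& in_cube g,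
      [forall j, ((g j == 0) || (g j == 1)) == (pi j == j)] &
      [forall j, (pi j != j) ==> (g j == a (pi j) j)]].

Definition half_nash (U : game) (a : 'I_m -> 'I_m -> R) (pi : {perm 'I_m}) : Prop :=
  exists s : seq {ffun 'I_m -> R},
    [/\ uniq s, (forall g, (g \in s) = EC a pi g) &
        (count (nash U) s).*2 = size s].

Definition maximal (U : game) (a : 'I_m -> 'I_m -> R) : Prop :=
  forall pi : {perm 'I_m}, (exists i, pi i = i) -> half_nash U a pi.

End Games.

(* Let pi fix some player and let g lie in EC(pi).  For a player i fixed by pi,
   lam^i(g) is the product of the factors g_j - a^i_j (as v = 0).  The sign of such
   a factor is 2 g_j - 1 when pi fixes j; when pi moves j, so that g_j = a^(pi j)_j,
   the orders delta^j give it as (-1)^([j < i] + [pi j < i] + [pi j < j]).  In the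
   product over all j the terms [j < i] and [pi j < i] cancel, so sign(lam^i) times
   2 g_i - 1 is prod_(pi j = j) (2 g_j - 1) * prod_j (-1)^[pi j < j], the same number
   for every fixed i, while players moved by pi are indifferent.  Thus g is an
   equilibrium iff that number is positive, and toggling one fixed coordinate of g
   is an involution of EC(pi) exchanging equilibria and non-equilibria. *)
From mathcomp Require Import all_boot all_order all_algebra all_fingroup.
From mathcomp Require Import zify ring lra.
Import Order.TTheory GRing.Theory Num.Theory.
Local Open Scope ring_scope.
Set Implicit Arguments. Unset Strict Implicit.

Lemma count_involution_half (T : eqType) (P : pred T) (f : T -> T) (s : seq T) :
  uniq s -> involutive f -> {in s, forall x, f x \in s} ->
  {in s, forall x, P (f x) = ~~ P x} -> (count P s).*2 = size s.
Proof.
move=> s_uniq fK f_s Pf.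
have f_inj : injective f := can_inj fK.
have s_fs : perm_eq s (map f s).
  apply: uniq_perm => //; first by rewrite (map_inj_uniq f_inj).
  move=> x; rewrite -{2}(fK x) (mem_map f_inj).
  by apply/idP/idP => [/f_s // | /f_s]; rewrite fK.
have countPC : count P s = count (predC P) s.
  by rewrite (seq.permP s_fs) count_map; apply: eq_in_count => x /Pf.
by rewrite -addnn {2}countPC count_predC.
Qed.

Lemma delta_perm_ltE m (j : 'I_m) (s : {perm 'I_m}) (i k : 'I_m) :
  delta_perm j s -> i != j -> k != j -> i != k ->
  (s i < s k)%N = (j < i)%N (+) (k < i)%N (+) (k < j)%N.
Proof.
move=> [_ ds] ij kj ik.
have sik : nat_of_ord (s i) != s k by rewrite (inj_eq val_inj) (inj_eq perm_inj).
move: (ij) (kj) (ik); rewrite -!(inj_eq val_inj) => /eqP nij /eqP nkj /eqP nik.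
case: (ltngtP i k) => hik; last by [].
- have -> : (s i < s k)%N = ~~ (i < j < k)%N.
    rewrite ltn_neqAle sik /= leqNgt; congr (~~ _).
    by apply/idP/idP => /(ds i k hik ij kj).
  by case: (ltngtP i j) => h1; case: (ltngtP k j) => h2 //=; lia.
- have -> : (s i < s k)%N = (k < j < i)%N by apply/idP/idP => /(ds k i hik kj ij).
  by case: (ltngtP i j) => h1; case: (ltngtP k j) => h2 //=; lia.
Qed.

Lemma prod_sign_perm_xor (R : comPzRingType) m (pi : {perm 'I_m}) (i : 'I_m) :
  \prod_(j < m) ((-1) ^+ ((j < i)%N (+) (pi j < i)%N (+) (pi j < j)%N) : R) =
  \prod_(j < m) (-1) ^+ (pi j < j)%N.
Proof.
under eq_bigr => j _ do rewrite !signr_addb.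
have reindex :
    \prod_(j < m) ((-1) ^+ (j < i)%N : R) = \prod_(j < m) (-1) ^+ (pi j < i)%N.
  exact: (reindex_inj (@perm_inj _ pi)).
by rewrite !big_split /= -reindex -big_split big1 ?mul1r // => j _ /=;
  rewrite -signr_addb addbb.
Qed.

Lemma pure_best_responseE (R : realFieldType) (z x y : R) :
  z = 0 \/ z = 1 -> 0 < x * (z *+ 2 - 1) * y ->
  [&& (0 < z) && (z < 1) ==> (x == 0), (z == 0) ==> (x <= 0) & (z == 1) ==> (0 <= x)]
  = (0 < y).
Proof.
case=> -> xy.
- rewrite ltxx eqxx (eq_sym 0) oner_eq0 /=; rewrite mul0rn sub0r mulrN1 in xy.
  by apply/idP/idP => h; nra.
- rewrite ltxx oner_eq0 eqxx andbF /=; rewrite mulr2n addrK mulr1 in xy.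
  by apply/idP/idP => h; nra.
Qed.

Section EquilibriumCandidates.
Variables (R : realFieldType) (m : nat) (a : 'I_m -> 'I_m -> R).
Hypothesis a_in01 : forall i j : 'I_m, i != j -> 0 < a i j < 1.

Lemma ECP (pi : {perm 'I_m}) (g : {ffun 'I_m -> R}) :
  reflect [/\ forall k, 0 <= g k <= 1,
              forall j, pi j = j -> g j = 0 \/ g j = 1
            & forall j, pi j != j -> g j = a (pi j) j]
          (EC a pi g).
Proof.
apply: (iffP and3P) =>
  [[/forallP cube /forallP fixed /forallP moved] | [cube fixed moved]].
  split=> [k | j /eqP pij | j pij]; first exact: cube.
    by have := fixed j; rewrite pij => /eqP/orP[]/eqP; [left | right].
  exact/eqP/(implyP (moved j)).
split; apply/forallP => j; first exact: cube.
  have [pij | pij] := eqVneq (pi j) j.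
    by case: (fixed j pij) => ->; rewrite eqxx ?orbT.
  by have /andP[a0 a1] := a_in01 pij; rewrite moved // (gt_eqF a0) (lt_eqF a1).
by apply/implyP => pij; rewrite moved.
Qed.

Definition EC_point (pi : {perm 'I_m}) (b : {ffun 'I_m -> bool}) : {ffun 'I_m -> R} :=
  [ffun j => if pi j == j then (b j)%:R else a (pi j) j].

Definition EC_seq (pi : {perm 'I_m}) : seq {ffun 'I_m -> R} :=
  undup (map (EC_point pi) (enum {ffun 'I_m -> bool})).

Lemma mem_EC_seq (pi : {perm 'I_m}) g : (g \in EC_seq pi) = EC a pi g.
Proof.
rewrite mem_undup; apply/mapP/ECP => [[b _ ->] | [_ fixed moved]].
  split=> [k | j pij | j pij]; rewrite ffunE.
  - case: eqP => [_ | /eqP pik]; first by case: (b k); rewrite /= ?ler01 ?lexx.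
    by have /andP[a0 a1] := a_in01 pik; rewrite !ltW.
  - by rewrite pij eqxx; case: (b j); [right | left].
  - by rewrite (negbTE pij).
exists [ffun j => g j == 1]; first by rewrite mem_enum.
apply/ffunP => j; rewrite !ffunE; have [pij | pij] := eqVneq (pi j) j.
  by case: (fixed j pij) => ->; rewrite ?eqxx // (eq_sym 0) oner_eq0.
exact: moved.
Qed.

Definition flip (i0 : 'I_m) (g : {ffun 'I_m -> R}) : {ffun 'I_m -> R} :=
  [ffun j => if j == i0 then 1 - g j else g j].

Lemma flipK i0 : involutive (flip i0).
Proof.
by move=> g; apply/ffunP => j; rewrite !ffunE; case: eqP => // _; rewrite opprB addrC subrK.
Qed.

Lemma EC_flip (pi : {perm 'I_m}) i0 g :
  pi i0 = i0 -> EC a pi g -> EC a pi (flip i0 g).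
Proof.
move=> pii0 /ECP[cube fixed moved]; apply/ECP.
split=> [k | j pij | j pij]; rewrite ffunE.
- case: eqP => _ //; have /andP[c0 c1] := cube k.
  by rewrite subr_ge0 lerBlDr lerDl c0 c1.
- case: eqP => [_ | _]; last exact: fixed j pij.
  by case: (fixed j pij) => ->; rewrite ?subr0 ?subrr; [right | left].
- by case: eqP => [ji0 | _]; [move: pij; rewrite ji0 pii0 eqxx | exact: moved j pij].
Qed.

Definition pure_sign (pi : {perm 'I_m}) (g : {ffun 'I_m -> R}) : R :=
  \prod_(j < m | pi j == j) (g j *+ 2 - 1).

Definition deficiency_sign (pi : {perm 'I_m}) : R := \prod_(j < m) (-1) ^+ (pi j < j)%N.

Definition EC_sign (pi : {perm 'I_m}) (g : {ffun 'I_m -> R}) : R :=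
  pure_sign pi g * deficiency_sign pi.

Lemma pure_sign_flip (pi : {perm 'I_m}) i0 g :
  pi i0 = i0 -> pure_sign pi (flip i0 g) = - pure_sign pi g.
Proof.
move=> pii0; rewrite /pure_sign (bigD1 i0) ?pii0 //= [in RHS](bigD1 i0) ?pii0 //=.
rewrite ffunE eqxx.
under eq_bigr => j /andP[_ /negbTE ji0] do rewrite ffunE ji0.
by rewrite !mulr2n; ring.
Qed.

Hypothesis a_neq :
  forall i1 i2 j : 'I_m, i1 != i2 -> i1 != j -> i2 != j -> a i1 j != a i2 j.
Hypothesis a_delta :
  forall j, exists s : {perm 'I_m}, delta_perm j s /\ assoc_perm a j s.

Lemma a_ltE (i k j : 'I_m) : i != j -> k != j -> i != k ->
  (a k j < a i j) = (j < i)%N (+) (k < i)%N (+) (k < j)%N.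
Proof.
move=> ij kj ik; have [s [ds [_ as_]]] := a_delta j.
rewrite -(delta_perm_ltE ds ij kj ik).
by apply/idP/idP => /(as_ i k ij kj).
Qed.

Definition factor_sign (pi : {perm 'I_m}) (g : {ffun 'I_m -> R}) (i j : 'I_m) : R :=
  if pi j == j then g j *+ 2 - 1
  else (-1) ^+ ((j < i)%N (+) (pi j < i)%N (+) (pi j < j)%N).

Lemma factor_sign_pos (pi : {perm 'I_m}) g (i j : 'I_m) :
  EC a pi g -> pi i = i -> j != i -> 0 < (g j - a i j) * factor_sign pi g i j.
Proof.
move=> /ECP[_ fixed moved] pii ji; have ij : i != j by rewrite eq_sym.
have /andP[a0 a1] := a_in01 ij.
rewrite /factor_sign; have [pij | pij] := eqVneq (pi j) j.
  by case: (fixed j pij) => ->; rewrite ?mul0rn ?mulr2n; lra.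
have pji : pi j != i by rewrite -{1}pii (inj_eq perm_inj).
have ipj : i != pi j by rewrite eq_sym.
rewrite moved // -(a_ltE ij pij ipj).
case lt_ai: (a (pi j) j < a i j); rewrite ?expr1 ?expr0.
  by rewrite mulrN1 oppr_gt0 subr_lt0.
by rewrite mulr1 subr_gt0 lt_neqAle eq_sym a_neq // leNgt lt_ai.
Qed.

Lemma prod_factor_sign (pi : {perm 'I_m}) g (i : 'I_m) :
  \prod_(j < m) factor_sign pi g i j = EC_sign pi g.
Proof.
rewrite /EC_sign /deficiency_sign -(prod_sign_perm_xor R pi i).
rewrite (bigID (fun j => pi j == j)) /=.
rewrite [in RHS](bigID (fun j => pi j == j)) /= mulrCA.
have -> : \prod_(j < m | pi j == j)
   ((-1) ^+ ((j < i)%N (+) (pi j < i)%N (+) (pi j < j)%N) : R) = 1.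
  by apply: big1 => j /eqP ->; rewrite addbb ltnn.
rewrite mul1r; congr (_ * _); apply: eq_bigr => j pij; rewrite /factor_sign.
  by rewrite pij.
by rewrite (negbTE pij).
Qed.

Lemma lam_sign_pos (pi : {perm 'I_m}) g (i : 'I_m) : EC a pi g -> pi i = i ->
  0 < (\prod_(j < m | j != i) (g j - a i j)) * (g i *+ 2 - 1) * EC_sign pi g.
Proof.
move=> gEC pii; have /ECP[_ fixed _] := gEC.
have sq1 : (g i *+ 2 - 1) * (g i *+ 2 - 1) = 1.
  by case: (fixed i pii) => ->; rewrite ?mul0rn ?mulr2n; lra.
have fs_i : factor_sign pi g i i = g i *+ 2 - 1 by rewrite /factor_sign pii eqxx.
rewrite -(prod_factor_sign pi g i) [\prod_(j < m) _](bigD1 i) //= fs_i.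
set L := \prod_(j < m | j != i) _; set W := \prod_(j < m | j != i) _.
have -> : L * (g i *+ 2 - 1) * ((g i *+ 2 - 1) * W) = L * W.
  by rewrite -mulrA (mulrA (g i *+ 2 - 1)) sq1 mul1r.
rewrite -big_split /=.
by apply: prodr_gt0 => j ji; exact: factor_sign_pos.
Qed.

End EquilibriumCandidates.

Section Equilibria.
Variables (R : realFieldType) (m : nat) (U : game R m) (a : 'I_m -> 'I_m -> R).
Hypothesis a_in01 : forall i j : 'I_m, i != j -> 0 < a i j < 1.
Hypothesis a_neq :
  forall i1 i2 j : 'I_m, i1 != i2 -> i1 != j -> i2 != j -> a i1 j != a i2 j.
Hypothesis a_delta :
  forall j, exists s : {perm 'I_m}, delta_perm j s /\ assoc_perm a j s.
Hypothesis lam_prod :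
  forall (i : 'I_m) (g : 'I_m -> R), (forall k, 0 <= g k <= 1) ->
  lam U i g = \prod_(j < m | j != i) (g j - a i j).

Lemma lam_moved_eq0 (pi : {perm 'I_m}) g (i : 'I_m) :
  EC a pi g -> pi i != i -> lam U i g = 0.
Proof.
move=> /(ECP a_in01)[cube _ moved] pii; rewrite lam_prod //.
pose j := (pi^-1)%g i; have pij : pi j = i by rewrite permKV.
have ji : j != i by apply: contra_neq pii => ij; rewrite -{1}ij pij.
have pjj : pi j != j by rewrite pij eq_sym.
by rewrite (bigD1 j) //= moved // pij subrr mul0r.
Qed.

Lemma nash_EC_sign (pi : {perm 'I_m}) g (i0 : 'I_m) :
  pi i0 = i0 -> EC a pi g -> nash U g = (0 < EC_sign pi g).
Proof.
move=> pii0 gEC; have /(ECP a_in01)[cube fixed moved] := gEC.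
have fixed_cond i : pi i = i ->
    [&& (0 < g i) && (g i < 1) ==> (lam U i g == 0), (g i == 0) ==> (lam U i g <= 0)
      & (g i == 1) ==> (0 <= lam U i g)] = (0 < EC_sign pi g).
  move=> pii; apply: pure_best_responseE; first exact: fixed.
  by rewrite lam_prod //; exact: lam_sign_pos.
have cube_g : in_cube g by case/and3P: gEC.
rewrite /nash cube_g /=; apply/forallP/idP => [/(_ i0) | pos i].
  by rewrite fixed_cond.
have [pii | pii] := eqVneq (pi i) i; first by rewrite fixed_cond.
have /andP[a0 a1] := a_in01 pii.
by rewrite moved // a0 a1 (gt_eqF a0) (lt_eqF a1) (lam_moved_eq0 gEC pii) eqxx.
Qed.

Lemma nash_flip (pi : {perm 'I_m}) (i0 : 'I_m) g :
  pi i0 = i0 -> EC a pi g -> nash U (flip i0 g) = ~~ nash U g.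
Proof.
move=> pii0 gEC.
have sign_neq0 : EC_sign pi g != 0.
  have := lam_sign_pos a_in01 a_neq a_delta gEC pii0.
  by apply: contraTneq => ->; rewrite mulr0 ltxx.
rewrite !(nash_EC_sign pii0) ?EC_flip // /EC_sign pure_sign_flip // mulNr oppr_gt0.
by rewrite -leNgt le_eqVlt (negbTE sign_neq0).
Qed.

End Equilibria.

Theorem theorem4p4 (R : realFieldType) (m : nat) (U : game R m)
  (v : 'I_m -> bool) (a : 'I_m -> 'I_m -> R) :
  (0 < m)%N ->
  product_game U v a ->
  char_tuple_is v a (fun _ => false) (@delta_perm m) ->
  maximal U a.
Proof.
move=> _ [a_in01 a_neq lam_v] [v0 a_delta] pi [i0 pii0].
have lam_prod i (g : 'I_m -> R) : (forall k, 0 <= g k <= 1) ->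
    lam U i g = \prod_(j < m | j != i) (g j - a i j).
  by move=> cube; rewrite lam_v // v0 expr0 mul1r.
have nash_flip_EC := nash_flip a_in01 a_neq a_delta lam_prod pii0.
exists (EC_seq a pi); split; [exact: undup_uniq | exact: mem_EC_seq |].
apply: (count_involution_half (f := flip i0)); first exact: undup_uniq.
- exact: flipK.
- by move=> g; rewrite !mem_EC_seq //; exact: EC_flip.
- by move=> g; rewrite mem_EC_seq // => /nash_flip_EC.
Qed.
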